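(* Let $\sigma$ be a finite sequence of transitions. Then $\sigma$ is $\omega$-iterable if and only if for every $n\ge 1$ the $n$-fold concatenation $\sigma^n=\sigma\sigma\cdots\sigma$ has an execution (from some valuation).
   Context: Fix a finite set of clocks $X=\{x_0,x_1,\dots,x_m\}$, where $x_0$ is a special reference clock. A valuation is a map $v:X\to\mathbb{R}_{\ge 0}$ with $v(x_0)=0$. For $\delta\ge 0$, $v+\delta$ is the valuation adding $\delta$ to every clock other than $x_0$; for $R\subseteq X\setminus\{x_0\}$, $[R]v$ sets the clocks of $R$ to $0$ and leaves the others unchanged. A guard is a conjunction of atomic constraints $x\sim c$ with $x\in X\setminus\{x_0\}$, $\sim\in\{<,\le,=,\ge,>\}$, $c\in\mathbb{N}$. A transition $t$ is a pair $(g,R)$ of a guard $g$ and a reset set $R\subseteq X\setminus\{x_0\}$ (control states are omitted). We write $v\xrightarrow{t}^{\delta}v'$ if $v+\delta\models g$ and $v'=[R](v+\delta)$. An execution of a sequence $\sigma=t_1\cdots t_k$ is a sequence of valuations $v_0,\dots,v_k$ such that there are $\delta_1,\dots,\delta_k\ge 0$ with $v_{i-1}\xrightarrow{t_i}^{\delta_i}v_i$ for all $i$; we then write $v_0\xrightarrow{\sigma}^{\delta}v_k$ with $\delta=\sum_i\delta_i$, and say $\sigma$ is executable from $v_0$. The sequence $\sigma$ is $\omega$-iterable (from $v_0$) if there are infinite sequences of valuations $v_0,v_1,\dots$ and delays $\delta_1,\delta_2,\dots$ with $v_0\xrightarrow{\sigma}^{\delta_1}v_1\xrightarrow{\sigma}^{\delta_2}v_2\cdots$.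 *)

From Stdlib Require Import Reals List Arith.
Import ListNotations.
Open Scope R_scope.

(* Clocks X = {x_0, ..., x_m}, represented as naturals <= m; x_0 is index 0. *)
Definition clock (m : nat) : Type := { x : nat | (x <= m)%nat }.

Definition is_ref {m : nat} (x : clock m) : bool := Nat.eqb (proj1_sig x) 0.

Definition valuation (m : nat) : Type := clock m -> R.

Definition valid_val {m : nat} (v : valuation m) : Prop :=
  (forall x : clock m, 0 <= v x) /\ (forall x : clock m, is_ref x = true -> v x = 0).

Definition delay {m : nat} (v : valuation m) (d : R) : valuation m :=
  fun x => if is_ref x then v x else v x + d.

Definition reset {m : nat} (Rs : clock m -> bool) (v : valuation m) : valuation m :=
  fun x => if Rs x then 0 else v x.

Inductive cmp : Type := CLt | CLe | CEq | CGe | CGt.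

Definition cmp_sem (c : cmp) (a b : R) : Prop :=
  match c with
  | CLt => a < b | CLe => a <= b | CEq => a = b | CGe => a >= b | CGt => a > b
  end.

Record atom (m : nat) : Type := mkAtom { a_clock : clock m; a_cmp : cmp; a_const : nat }.
Arguments a_clock {m}. Arguments a_cmp {m}. Arguments a_const {m}.

Definition guard (m : nat) : Type := list (atom m).

Definition sat_atom {m : nat} (v : valuation m) (a : atom m) : Prop :=
  cmp_sem (a_cmp a) (v (a_clock a)) (INR (a_const a)).

Definition sat_guard {m : nat} (v : valuation m) (g : guard m) : Prop :=
  Forall (sat_atom v) g.

Record transition (m : nat) : Type := mkTrans { t_guard : guard m; t_reset : clock m -> bool }.
Arguments t_guard {m}. Arguments t_reset {m}.

Definition wf_trans {m : nat} (t : transition m) : Prop :=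
  Forall (fun a => is_ref (a_clock a) = false) (t_guard t) /\
  (forall x : clock m, is_ref x = true -> t_reset t x = false).

Definition step {m : nat} (v : valuation m) (t : transition m) (d : R) (v' : valuation m) : Prop :=
  0 <= d /\ sat_guard (delay v d) (t_guard t) /\ v' = reset (t_reset t) (delay v d).

Inductive exec {m : nat} : valuation m -> list (transition m) -> R -> valuation m -> Prop :=
  | exec_nil : forall v, exec v [] 0 v
  | exec_cons : forall v t s d d' v1 v2,
      step v t d v1 -> exec v1 s d' v2 -> exec v (t :: s) (d + d') v2.

Definition executable_from {m : nat} (s : list (transition m)) (v0 : valuation m) : Prop :=
  valid_val v0 /\ exists d v', exec v0 s d v'.

Definition omega_iterable_from {m : nat} (s : list (transition m)) (v0 : valuation m) : Prop :=
  valid_val v0 /\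
  exists (vs : nat -> valuation m) (ds : nat -> R),
    vs 0%nat = v0 /\ forall i : nat, exec (vs i) s (ds (S i)) (vs (S i)).

Definition omega_iterable {m : nat} (s : list (transition m)) : Prop :=
  exists v0, omega_iterable_from s v0.

Definition seq_pow {m : nat} (s : list (transition m)) (n : nat) : list (transition m) :=
  concat (repeat s n).

(* The forward direction takes the first n iterations of an infinite run. For the converse,
   let K bound the constants in the guards of sigma. Region equivalence with respect to K
   (agreement on the tests [x < c], [x <= c] and, for clocks not above K, [x - y < c],
   [x - y <= c], with c <= K) has finitely many classes and is a simulation for executions of
   sigma from valuations with nonnegative clocks. A run of sigma^N with N larger than the number
   of classes visits a class twice, at steps i < j. Every valuation equivalent to the one at step
   i can then replay the loop from i to j and land again in the class of step i, so dependent
   choice yields an infinite run. *)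

From Stdlib Require Import Reals List Arith Lia Lra Classical ClassicalEpsilon Relations.
Import ListNotations.
Open Scope R_scope.

Lemma dependent_choice {A : Type} (next : A -> A -> Prop) (P : A -> Prop) (a0 : A) :
  (forall a, P a -> exists b, next a b /\ P b) -> P a0 ->
  exists g : nat -> A, g O = a0 /\ forall n, next (g n) (g (S n)).
Proof.
  intros Hstep Ha0.
  destruct (choice (fun a b => P a -> next a b /\ P b)) as [F HF].
  { intros a. destruct (classic (P a)) as [Ha|Ha].
    - destruct (Hstep a Ha) as [b Hb]. exists b; auto.
    - exists a; contradiction. }
  assert (HP : forall n, P (Nat.iter n F a0)).
  { induction n as [|n IH]; [exact Ha0|apply (HF _ IH)]. }
  exists (fun n => Nat.iter n F a0); split; [reflexivity|].
  intros n; apply (HF _ (HP n)).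
Qed.

Section Lasso.
Variables (A : Type) (next : A -> A -> Prop) (inv : A -> Prop) (sim : A -> A -> Prop).
Hypothesis inv_next : forall a b, inv a -> next a b -> inv b.
Hypothesis sim_refl : forall a, sim a a.
Hypothesis sim_trans : forall a b c, sim a b -> sim b c -> sim a c.
Hypothesis sim_next :
  forall a b a', sim a b -> inv a -> next a a' -> exists b', next b b' /\ sim a' b'.

Lemma inv_reach a b : inv a -> clos_refl_trans_1n A next a b -> inv b.
Proof. intros Ha H; induction H; eauto. Qed.

Lemma sim_reach a b a' :
  sim a b -> inv a -> clos_refl_trans_1n A next a a' ->
  exists b', clos_refl_trans_1n A next b b' /\ sim a' b'.
Proof.
  intros Hs Ha H; revert b Hs; induction H as [a|a a1 a' Hn _ IH]; intros b Hs.
  - exists b; split; [constructor|exact Hs].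
  - destruct (sim_next _ _ _ Hs Ha Hn) as [b1 [Hb1 Hs1]].
    destruct (IH (inv_next _ _ Ha Hn) b1 Hs1) as [b' [Hb' Hs']].
    exists b'; split; [econstructor; eauto|exact Hs'].
Qed.

Lemma run_of_lasso (f : nat -> A) (i j : nat) :
  (i < j)%nat -> inv (f O) -> (forall k, (k < j)%nat -> next (f k) (f (S k))) ->
  sim (f i) (f j) ->
  exists g : nat -> A, g O = f O /\ forall n, next (g n) (g (S n)).
Proof.
  intros Hij Hinv Hf Hloop.
  assert (Hseg : forall n k, (k + n <= j)%nat -> clos_refl_trans_1n A next (f k) (f (k + n)%nat)).
  { induction n as [|n IH]; intros k Hk.
    - rewrite Nat.add_0_r; constructor.
    - rewrite Nat.add_succ_r, <- Nat.add_succ_l.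
      econstructor; [apply Hf; lia|apply IH; lia]. }
  assert (Hinv_i : inv (f i)) by (apply (inv_reach (f O)); [exact Hinv|apply (Hseg i O); lia]).
  apply dependent_choice with
    (P := fun u => exists w, clos_refl_trans_1n A next u w /\ sim (f i) w).
  - intros u [w [Hw Hs]]. destruct Hw as [|u1 w Hu1 Hw].
    + (* [u] sits in the class of [f i]: replay the loop from [f i] to [f j]. *)
      destruct (sim_next _ _ _ Hs Hinv_i (Hf i Hij)) as [u1 [Hu1 Hs1]].
      destruct (sim_reach (f (S i)) u1 (f j) Hs1 (inv_next _ _ Hinv_i (Hf i Hij)))
        as [w' [Hw' Hs']].
      { replace j with (S i + (j - S i))%nat by lia. apply Hseg; lia. }
      exists u1; split; [exact Hu1|exists w'; split; eauto].
    + exists u1; split; [exact Hu1|exists w; split; assumption].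
  - exists (f i); split; [apply (Hseg i O); lia|apply sim_refl].
Qed.

End Lasso.

Lemma pigeonhole_nat {T : Type} (D : list T) (g : nat -> T) :
  (forall i, (i <= length D)%nat -> In (g i) D) ->
  exists i j, (i < j <= length D)%nat /\ g i = g j.
Proof.
  intros HD; apply NNPP; intros Hno.
  assert (Hnd : NoDup (map g (seq 0 (S (length D))))).
  { apply NoDup_map_NoDup_ForallPairs; [|apply seq_NoDup].
    intros i j Hi Hj Hg; apply in_seq in Hi, Hj.
    destruct (Nat.lt_trichotomy i j) as [Hlt|[Heq|Hgt]]; [| exact Heq |];
      exfalso; apply Hno; [exists i, j | exists j, i]; split; auto; lia. }
  apply NoDup_incl_length with (l' := D) in Hnd.
  - rewrite length_map, length_seq in Hnd; lia.
  - intros x (i & <- & Hi)%in_map_iff; apply in_seq in Hi; apply HD; lia.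
Qed.

Definition finite_index {A : Type} (R : A -> A -> Prop) : Prop :=
  exists N, forall f : nat -> A, exists i j, (i < j <= N)%nat /\ R (f i) (f j).

Fixpoint bool_lists (n : nat) : list (list bool) :=
  match n with
  | O => [[]]
  | S n => map (cons true) (bool_lists n) ++ map (cons false) (bool_lists n)
  end.

Lemma in_bool_lists (l : list bool) : In l (bool_lists (length l)).
Proof.
  induction l as [|b l IH]; [left; reflexivity|].
  apply in_or_app; destruct b; [left|right]; apply in_map, IH.
Qed.

Lemma agreement_finite_index {A T : Type} (holds : A -> T -> Prop) (ts : list T) :
  finite_index (fun a b => forall t, In t ts -> (holds a t <-> holds b t)).
Proof.
  set (signature := fun a =>
    map (fun t => if excluded_middle_informative (holds a t) then true else false) ts).
  exists (length (bool_lists (length ts))). intros f.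
  destruct (pigeonhole_nat (bool_lists (length ts)) (fun i => signature (f i)))
    as (i & j & Hij & Hsig).
  { intros i _. unfold signature. rewrite <- length_map at 1. apply in_bool_lists. }
  exists i, j; split; [exact Hij|]. intros t Ht.
  apply map_ext_in_iff with (a := t) in Hsig; [|exact Ht].
  destruct (excluded_middle_informative (holds (f i) t)),
    (excluded_middle_informative (holds (f j) t)); easy.
Qed.

Lemma exists_lt_all (hi : list R) : exists z, forall y, In y hi -> z < y.
Proof.
  induction hi as [|y hi [z Hz]]; [exists 0; intros _ []|].
  exists (Rmin z y - 1). pose proof (Rmin_l z y); pose proof (Rmin_r z y).
  intros y' [<-|Hy']; [|specialize (Hz y' Hy')]; lra.
Qed.

Lemma exists_between_pt (x : R) (hi : list R) :
  (forall y, In y hi -> x < y) -> exists z, x < z /\ forall y, In y hi -> z < y.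
Proof.
  induction hi as [|y hi IH]; intros Hx.
  - exists (x + 1); split; [lra|intros _ []].
  - destruct IH as [z [Hxz Hz]]; [intros y' Hy'; apply Hx; right; exact Hy'|].
    assert (x < y) by (apply Hx; left; reflexivity).
    exists (Rmin z ((x + y) / 2)).
    pose proof (Rmin_l z ((x + y) / 2)); pose proof (Rmin_r z ((x + y) / 2)).
    split; [apply Rmin_glb_lt; lra|].
    intros y' [<-|Hy']; [|specialize (Hz y' Hy')]; lra.
Qed.

Lemma exists_between (lo hi : list R) :
  (forall x y, In x lo -> In y hi -> x < y) ->
  exists z, (forall x, In x lo -> x < z) /\ (forall y, In y hi -> z < y).
Proof.
  induction lo as [|x lo IH]; intros Hlh.
  - destruct (exists_lt_all hi) as [z Hz]. exists z; split; [intros _ []|exact Hz].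
  - destruct IH as [z [Hlo Hhi]]; [intros x' y Hx' Hy; apply Hlh; [right|]; assumption|].
    destruct (Rlt_dec x z) as [Hxz|Hxz].
    + exists z; split; [intros x' [<-|Hx']; auto|exact Hhi].
    + destruct (exists_between_pt x hi) as [z' [Hxz' Hz']];
        [intros y Hy; apply Hlh; [left|]; auto|].
      exists z'; split; [|exact Hz'].
      intros x' [<-|Hx']; [|specialize (Hlo x' Hx')]; lra.
Qed.

Lemma order_interpolation {I : Type} (P : I -> Prop) (L : list I) (p q : I -> R) (d : R) :
  (forall i, P i -> In i L) ->
  (forall i j, P i -> P j -> (p i < p j <-> q i < q j)) ->
  exists d', forall i, P i -> (p i < d <-> q i < d') /\ (d < p i <-> d' < q i).
Proof.
  intros HL Hiso.
  destruct (classic (exists k, P k /\ p k = d)) as [[k [Hk <-]]|Hnot].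
  { exists (q k). intros i Hi; split; apply Hiso; assumption. }
  set (side := fun (lt : I -> Prop) =>
    map q (filter (fun i => if excluded_middle_informative (P i /\ lt i) then true else false) L)).
  assert (Hside : forall lt y, In y (side lt) <-> exists i, y = q i /\ P i /\ lt i).
  { intros lt y; unfold side; rewrite in_map_iff; split.
    - intros (i & <- & Hi); apply filter_In in Hi as [_ Hi].
      destruct excluded_middle_informative; [eauto|discriminate].
    - intros (i & -> & Hi); exists i; split; [reflexivity|].
      apply filter_In; split; [apply HL, Hi|].
      destruct excluded_middle_informative; tauto. }
  destruct (exists_between (side (fun i => p i < d)) (side (fun i => d < p i))) as [d' [Hlo Hhi]].
  { intros x y (i & -> & Hi & Hid)%Hside (j & -> & Hj & Hjd)%Hside.
    apply Hiso; [exact Hi|exact Hj|lra]. }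
  exists d'. intros i Hi.
  destruct (Rtotal_order (p i) d) as [Hid|[Hid|Hid]].
  - assert (q i < d') by (apply Hlo, Hside; eauto); lra.
  - exfalso; eauto.
  - assert (d' < q i) by (apply Hhi, Hside; eauto); lra.
Qed.

Lemma cmp_sem_transfer (op : cmp) (a b r : R) :
  (a < r <-> b < r) -> (a <= r <-> b <= r) -> (cmp_sem op a r <-> cmp_sem op b r).
Proof. intros Hlt Hle; destruct op; simpl; lra. Qed.

Lemma delay_nonref {m : nat} (v : valuation m) (d : R) (x : clock m) :
  is_ref x = false -> delay v d x = v x + d.
Proof. intros Hx; unfold delay; rewrite Hx; reflexivity. Qed.

Lemma clocks_listing (m : nat) : exists xs : list (clock m), forall x, In x xs.
Proof.
  exists (flat_map (fun a => match le_dec a m with left H => [exist _ a H] | right _ => [] end)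
                   (seq 0 (S m))).
  intros [a Ha]; apply in_flat_map; exists a; split; [apply in_seq; lia|].
  destruct (le_dec a m) as [H|H]; [|contradiction].
  left; f_equal; apply le_unique.
Qed.

Definition nonneg_clocks {m : nat} (v : valuation m) : Prop :=
  forall x, is_ref x = false -> 0 <= v x.

Lemma nonneg_clocks_step {m : nat} (v : valuation m) t d v1 :
  nonneg_clocks v -> step v t d v1 -> nonneg_clocks v1.
Proof.
  intros Hv (Hd & _ & ->) x Hx; unfold reset.
  destruct (t_reset t x); [lra|].
  rewrite delay_nonref by exact Hx. pose proof (Hv x Hx); lra.
Qed.

Lemma nonneg_clocks_exec {m : nat} (v : valuation m) s d v1 :
  nonneg_clocks v -> exec v s d v1 -> nonneg_clocks v1.
Proof. intros Hv H; induction H; eauto using nonneg_clocks_step. Qed.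

Section Regions.
Context {m : nat} (K : nat).

Inductive region_test : Type :=
  | BoundLt (x : clock m) (c : nat)
  | BoundLe (x : clock m) (c : nat)
  | DiffLt (x y : clock m) (c : nat)
  | DiffLe (x y : clock m) (c : nat).

(* Differences are only compared while both clocks are at most [K]: beyond [K] the guards
   can no longer tell them apart, and this is what makes the index finite. *)
Definition holds (v : valuation m) (t : region_test) : Prop :=
  match t with
  | BoundLt x c => v x < INR c
  | BoundLe x c => v x <= INR c
  | DiffLt x y c => v x <= INR K /\ v y <= INR K /\ v x - v y < INR c
  | DiffLe x y c => v x <= INR K /\ v y <= INR K /\ v x - v y <= INR c
  end.

Definition relevant (t : region_test) : Prop :=
  match t with
  | BoundLt x c | BoundLe x c => is_ref x = false /\ (c <= K)%nat
  | DiffLt x y c | DiffLe x y c => is_ref x = false /\ is_ref y = false /\ (c <= K)%nat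
  end.

Definition region_equiv (v w : valuation m) : Prop :=
  forall t, relevant t -> (holds v t <-> holds w t).

Lemma region_equiv_refl v : region_equiv v v.
Proof. intros t _; reflexivity. Qed.

Lemma region_equiv_trans u v w : region_equiv u v -> region_equiv v w -> region_equiv u w.
Proof. intros H1 H2 t Ht; rewrite (H1 t Ht); exact (H2 t Ht). Qed.

Lemma relevant_tests_listing : exists ts, forall t, relevant t -> In t ts.
Proof.
  destruct (clocks_listing m) as [xs Hxs].
  exists (flat_map (fun c => flat_map (fun x =>
            BoundLt x c :: BoundLe x c :: flat_map (fun y => [DiffLt x y c; DiffLe x y c]) xs)
          xs) (seq 0 (S K))).
  intros t Ht; apply in_flat_map.
  destruct t as [x c|x c|x y c|x y c]; exists c; simpl in Ht;
    (split; [apply in_seq; lia|]); apply in_flat_map; exists x; (split; [apply Hxs|]).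
  - left; reflexivity.
  - right; left; reflexivity.
  - right; right; apply in_flat_map; exists y; split; [apply Hxs|left; reflexivity].
  - right; right; apply in_flat_map; exists y; split; [apply Hxs|right; left; reflexivity].
Qed.

Lemma region_equiv_finite_index : finite_index region_equiv.
Proof.
  destruct relevant_tests_listing as [ts Hts].
  destruct (agreement_finite_index holds ts) as [N HN].
  exists N; intros f. destruct (HN f) as (i & j & Hij & Hag).
  exists i, j; split; [exact Hij|]. intros t Ht; apply Hag, Hts, Ht.
Qed.

Lemma region_equiv_bound v w x c :
  region_equiv v w -> is_ref x = false -> (c <= K)%nat ->
  (v x < INR c <-> w x < INR c) /\ (v x <= INR c <-> w x <= INR c).
Proof.
  intros He Hx Hc; exact (conj (He (BoundLt x c) (conj Hx Hc)) (He (BoundLe x c) (conj Hx Hc))).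
Qed.

Lemma region_equiv_nonneg_clocks v w : region_equiv v w -> nonneg_clocks v -> nonneg_clocks w.
Proof.
  intros He Hv x Hx.
  pose proof (region_equiv_bound v w x 0 He Hx (Nat.le_0_l K)); pose proof (Hv x Hx).
  simpl in *; lra.
Qed.

Definition pending (v : valuation m) (o : option (clock m * nat)) : Prop :=
  match o with
  | None => True
  | Some (x, c) => is_ref x = false /\ (c <= K)%nat /\ v x <= INR c
  end.

Definition slack (v : valuation m) (o : option (clock m * nat)) : R :=
  match o with None => 0 | Some (x, c) => INR c - v x end.

Lemma region_equiv_pending v w o : region_equiv v w -> pending v o -> pending w o.
Proof.
  intros He; destruct o as [[x c]|]; simpl; [|trivial].
  intros (Hx & Hc & Hv); repeat split; try assumption.
  apply (region_equiv_bound v w x c He Hx Hc), Hv.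
Qed.

Lemma region_equiv_slack_order v w o o' :
  region_equiv v w -> pending v o -> pending v o' ->
  (slack v o < slack v o' <-> slack w o < slack w o').
Proof.
  intros He Ho Ho'.
  pose proof (region_equiv_pending _ _ _ He Ho) as Hwo.
  pose proof (region_equiv_pending _ _ _ He Ho') as Hwo'.
  destruct o as [[x c]|], o' as [[y c']|]; simpl in *.
  - destruct Ho as (Hx & Hc & Hvx), Ho' as (Hy & Hc' & Hvy), Hwo as (_ & _ & Hwx),
      Hwo' as (_ & _ & Hwy).
    pose proof (le_INR _ _ Hc) as HcK; pose proof (le_INR _ _ Hc') as Hc'K.
    destruct (le_lt_dec c c') as [Hcc|Hcc].
    + assert (Hrel : relevant (DiffLt y x (c' - c))) by (simpl; repeat split; auto; lia).
      pose proof (He _ Hrel) as H; simpl in H; rewrite minus_INR in H by exact Hcc.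
      lra.
    + assert (Hrel : relevant (DiffLe x y (c - c'))) by (simpl; repeat split; auto; lia).
      pose proof (He _ Hrel) as H; simpl in H; rewrite minus_INR in H by lia.
      lra.
  - lra.
  - destruct Ho' as (Hy & Hc' & _).
    pose proof (region_equiv_bound v w y c' He Hy Hc'); lra.
  - reflexivity.
Qed.

(* The delay [d'] is placed among the slacks of [w] as [d] lies among those of [v]. *)
Lemma region_equiv_delay_bounds v w d :
  region_equiv v w -> 0 <= d ->
  exists d', 0 <= d' /\ forall x c, is_ref x = false -> (c <= K)%nat ->
    (v x + d < INR c <-> w x + d' < INR c) /\ (v x + d <= INR c <-> w x + d' <= INR c).
Proof.
  intros He Hd.
  destruct (clocks_listing m) as [xs Hxs].
  destruct (order_interpolation (pending v) (None :: map Some (list_prod xs (seq 0 (S K))))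
              (slack v) (slack w) d) as [d' Hd'].
  { intros [[x c]|] Ho; [right|left; reflexivity].
    apply in_map, in_prod; [apply Hxs|apply in_seq; simpl in Ho; lia]. }
  { intros o o' Ho Ho'; apply region_equiv_slack_order; assumption. }
  assert (Hd'0 : 0 <= d').
  { destruct (Hd' None I) as [_ H]; simpl in H; lra. }
  exists d'; split; [exact Hd'0|].
  intros x c Hx Hc. destruct (Rle_lt_dec (v x) (INR c)) as [Hv|Hv].
  - destruct (Hd' (Some (x, c)) (conj Hx (conj Hc Hv))) as [Hbelow Habove].
    simpl in Hbelow, Habove; lra.
  - pose proof (region_equiv_bound v w x c He Hx Hc); lra.
Qed.

Lemma region_equiv_delay v w d :
  region_equiv v w -> 0 <= d -> exists d', 0 <= d' /\ region_equiv (delay v d) (delay w d').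
Proof.
  intros He Hd.
  destruct (region_equiv_delay_bounds v w d He Hd) as (d' & Hd'0 & Hbound).
  exists d'; split; [exact Hd'0|].
  intros t Ht; pose proof (He t Ht) as Hvw.
  destruct t as [x c|x c|x y c|x y c]; simpl in Ht, Hvw |- *; rewrite ?delay_nonref by tauto.
  1,2: apply Hbound; tauto.
  all: destruct Ht as (Hx & Hy & Hc);
    pose proof (Hbound x K Hx (le_n K)); pose proof (Hbound y K Hy (le_n K)); lra.
Qed.

(* Without nonnegativity, no test would transfer these comparisons between a reset clock and
   a running one. *)
Lemma region_equiv_reset_diff v w y c :
  region_equiv v w -> nonneg_clocks v -> is_ref y = false -> (c <= K)%nat ->
  (0 - v y < INR c <-> 0 - w y < INR c) /\ (0 - v y <= INR c <-> 0 - w y <= INR c).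
Proof.
  intros He Hv Hy Hc.
  pose proof (Hv y Hy); pose proof (region_equiv_nonneg_clocks _ _ He Hv y Hy).
  destruct c as [|c].
  - pose proof (region_equiv_bound v w y 0 He Hy (Nat.le_0_l K)); simpl in *; lra.
  - pose proof (lt_0_INR (S c) (Nat.lt_0_succ c)); lra.
Qed.

Lemma region_equiv_reset (Rs : clock m -> bool) v w :
  region_equiv v w -> nonneg_clocks v -> region_equiv (reset Rs v) (reset Rs w).
Proof.
  intros He Hv t Ht; pose proof (He t Ht) as Hvw; unfold reset.
  destruct t as [x c|x c|x y c|x y c]; simpl in Ht, Hvw |- *.
  1,2: destruct (Rs x); [reflexivity|exact Hvw].
  all: destruct Ht as (Hx & Hy & Hc); destruct (Rs x), (Rs y); [reflexivity| | |exact Hvw].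
  1,3: pose proof (region_equiv_bound v w y K He Hy (le_n K));
    pose proof (region_equiv_reset_diff v w y c He Hv Hy Hc); lra.
  all: pose proof (region_equiv_bound v w x K He Hx (le_n K));
    pose proof (region_equiv_bound v w x c He Hx Hc); lra.
Qed.

Lemma region_equiv_guard v w (g : guard m) :
  region_equiv v w -> Forall (fun a => is_ref (a_clock a) = false) g ->
  Forall (fun a => (a_const a <= K)%nat) g -> sat_guard v g -> sat_guard w g.
Proof.
  unfold sat_guard; rewrite !Forall_forall.
  intros He Href Hconst Hv a Ha; unfold sat_atom.
  destruct (region_equiv_bound v w _ _ He (Href a Ha) (Hconst a Ha)) as [Hlt Hle].
  exact (proj1 (cmp_sem_transfer _ _ _ _ Hlt Hle) (Hv a Ha)).
Qed.

Definition const_bounded (t : transition m) : Prop :=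
  Forall (fun a => (a_const a <= K)%nat) (t_guard t).

Lemma region_equiv_step v w t d v1 :
  region_equiv v w -> nonneg_clocks v -> wf_trans t -> const_bounded t -> step v t d v1 ->
  exists d' w1, step w t d' w1 /\ region_equiv v1 w1.
Proof.
  intros He Hv [Href _] Hconst (Hd & Hg & ->).
  destruct (region_equiv_delay v w d He Hd) as [d' [Hd' He']].
  exists d', (reset (t_reset t) (delay w d')); split.
  - repeat split; [exact Hd'|]. exact (region_equiv_guard _ _ _ He' Href Hconst Hg).
  - apply region_equiv_reset; [exact He'|].
    intros x Hx; rewrite delay_nonref by exact Hx; pose proof (Hv x Hx); lra.
Qed.

Lemma region_equiv_exec s v w d v1 :
  Forall wf_trans s -> Forall const_bounded s ->
  region_equiv v w -> nonneg_clocks v -> exec v s d v1 ->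
  exists w1, (exists d', exec w s d' w1) /\ region_equiv v1 w1.
Proof.
  intros Hwf Hconst He Hv H; revert w He Hwf Hconst.
  induction H as [v|v t s d d1 v1 v2 Hst _ IH]; intros w He Hwf Hconst.
  - exists w; split; [exists 0; constructor|exact He].
  - inversion Hwf as [|? ? Hwf_t Hwf_s]; inversion Hconst as [|? ? Hconst_t Hconst_s]; subst.
    destruct (region_equiv_step v w t d v1 He Hv Hwf_t Hconst_t Hst) as (d' & w1 & Hst' & He1).
    destruct (IH (nonneg_clocks_step _ _ _ _ Hv Hst) w1 He1 Hwf_s Hconst_s)
      as (w2 & [d1' Hx] & He2).
    exists w2; split; [exists (d' + d1'); econstructor; eassumption|exact He2].
Qed.

End Regions.

Lemma exec_app {m : nat} (u v w : valuation m) s1 s2 d1 d2 :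
  exec u s1 d1 v -> exec v s2 d2 w -> exec u (s1 ++ s2) (d1 + d2) w.
Proof.
  intros H1; revert d2; induction H1 as [u|u t s d d' u1 v Hst _ IH]; intros d2 H2; simpl.
  - rewrite Rplus_0_l; exact H2.
  - rewrite Rplus_assoc; econstructor; [exact Hst|apply IH, H2].
Qed.

Lemma exec_app_inv {m : nat} (u w : valuation m) s1 s2 d :
  exec u (s1 ++ s2) d w -> exists d1 d2 v, exec u s1 d1 v /\ exec v s2 d2 w.
Proof.
  revert u d; induction s1 as [|t s1 IH]; intros u d H; simpl in H.
  - exists 0, d, u; split; [constructor|exact H].
  - inversion H as [|? ? ? d0 d' u1 ? Hst Hrest]; subst.
    destruct (IH _ _ Hrest) as (d1 & d2 & v & H1 & H2).
    exists (d0 + d1), d2, v; split; [econstructor; eassumption|exact H2].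
Qed.

Lemma exec_seq_pow_of_run {m : nat} (s : list (transition m)) (vs : nat -> valuation m)
  (ds : nat -> R) :
  (forall i, exec (vs i) s (ds (S i)) (vs (S i))) ->
  forall n i, exists d, exec (vs i) (seq_pow s n) d (vs (i + n)%nat).
Proof.
  intros Hrun n; induction n as [|n IH]; intros i.
  - rewrite Nat.add_0_r; exists 0; constructor.
  - destruct (IH (S i)) as [d Hd].
    rewrite Nat.add_succ_r, <- Nat.add_succ_l.
    exists (ds (S i) + d); exact (exec_app _ _ _ s _ _ _ (Hrun i) Hd).
Qed.

Lemma run_of_exec_seq_pow {m : nat} (s : list (transition m)) n (v v' : valuation m) d :
  exec v (seq_pow s n) d v' ->
  exists f : nat -> valuation m,
    f O = v /\ forall k, (k < n)%nat -> exists d, exec (f k) s d (f (S k)).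
Proof.
  revert v d; induction n as [|n IH]; intros v d H.
  - exists (fun _ => v); split; [reflexivity|intros k Hk; lia].
  - destruct (exec_app_inv _ _ s (seq_pow s n) d H) as (d1 & d2 & u & H1 & H2).
    destruct (IH u d2 H2) as (f & Hf0 & Hf).
    exists (fun k => match k with O => v | S k => f k end); split; [reflexivity|].
    intros [|k] Hk; [subst; eauto|apply Hf; lia].
Qed.

Lemma omega_iterable_of_run {m : nat} (s : list (transition m)) (g : nat -> valuation m) :
  valid_val (g O) -> (forall n, exists d, exec (g n) s d (g (S n))) -> omega_iterable s.
Proof.
  intros Hg0 Hg. destruct (choice (fun n d => exec (g n) s d (g (S n))) Hg) as [ds Hds].
  exists (g O); split; [exact Hg0|].
  exists g, (fun n => ds (Nat.pred n)); split; [reflexivity|exact Hds].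
Qed.

Definition max_guard_const {m : nat} (s : list (transition m)) : nat :=
  list_max (map a_const (flat_map t_guard s)).

Lemma const_bounded_max_guard_const {m : nat} (s : list (transition m)) :
  Forall (const_bounded (max_guard_const s)) s.
Proof.
  pose proof (proj1 (list_max_le _ (max_guard_const s)) (le_n _)) as Hmax.
  rewrite Forall_forall in Hmax |- *; intros t Ht.
  unfold const_bounded; rewrite Forall_forall; intros a Ha.
  apply Hmax, in_map, in_flat_map; exists t; split; assumption.
Qed.

Theorem lemma1 (m : nat) (sigma : list (transition m))
  (Hwf : Forall wf_trans sigma) :
  omega_iterable sigma <->
  (forall n : nat, (1 <= n)%nat -> exists v0 : valuation m, executable_from (seq_pow sigma n) v0).
Proof.
  split.
  - intros (v0 & Hv0 & vs & ds & Hvs0 & Hrun) n _.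
    destruct (exec_seq_pow_of_run sigma vs ds Hrun n O) as [d Hd].
    exists v0; split; [exact Hv0|]. rewrite <- Hvs0; eauto.
  - intros Hpow. set (K := max_guard_const sigma).
    destruct (@region_equiv_finite_index m K) as [N HN].
    destruct (Hpow (S N) ltac:(lia)) as (v0 & Hv0 & d & v' & Hexec).
    destruct (run_of_exec_seq_pow sigma _ _ _ _ Hexec) as (f & Hf0 & Hf).
    destruct (HN f) as (i & j & Hij & Hloop).
    destruct (run_of_lasso _ (fun u u' => exists d, exec u sigma d u') nonneg_clocks
                (region_equiv K)) with (f := f) (i := i) (j := j) as (g & Hg0 & Hg).
    + intros u u' Hu [d' Hd']; exact (nonneg_clocks_exec _ _ _ _ Hu Hd').
    + apply region_equiv_refl.
    + apply region_equiv_trans.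
    + intros u w u' He Hu [d' Hd'].
      exact (region_equiv_exec K _ _ _ _ _ Hwf (const_bounded_max_guard_const sigma) He Hu Hd').
    + lia.
    + rewrite Hf0; intros x _; apply (proj1 Hv0).
    + intros k Hk; apply Hf; lia.
    + exact Hloop.
    + apply omega_iterable_of_run with g; [rewrite Hg0, Hf0; exact Hv0|exact Hg].
Qed.
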